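(* Every ado-semilattice $(S,\sqcup,\cap)$ is a $\curlyvee$-algebra when one defines $a\curlyvee b=(a\sqcup b)\cap(b\sqcup a)$. Consequently, every functional algebra of signature $(\curlyvee)$ is a $\curlyvee$-algebra.
   Context: An o-semilattice is an algebra $(L,\cap,\sqcup)$ such that $(L,\cap)$ is a semilattice and, with $x\leq y$ iff $x=x\cap y$, for all $x,y,z$: (i) $x\leq x\sqcup y$; (ii) $(x\cap y)\sqcup(y\cap z)\leq y$; (iii) $x\sqcup y\leq x\sqcup(y\cap(x\sqcup y))$; (iv) $x\cap z\leq(x\cap y)\sqcup z$. It is distributive if $(a\cap d)\sqcup((b\cap d)\cap(c\cap d))=((a\cap d)\sqcup(b\cap d))\cap((a\cap d)\sqcup(c\cap d))$ for all $a,b,c,d$. An ado-semilattice is a distributive o-semilattice in which $\sqcup$ is associative. A left regular band is a set with a binary operation $\sqcup$ satisfying $a\sqcup(b\sqcup c)=(a\sqcup b)\sqcup c$, $a\sqcup a=a$, $a\sqcup b=(a\sqcup b)\sqcup a$; write $a\lesssim b$ iff $b\sqcup a=b$. A $\curlyvee$-algebra is an algebra $(S,\curlyvee)$ such that, defining $a\sqcup b=a\curlyvee(a\curlyvee b)$: $(S,\sqcup)$ is a left regular band; $\curlyvee$ is commutative and idempotent; $(a\curlyvee b)\sqcup(a\sqcup b)=a\sqcup b$; $a\sqcup(b\curlyvee c)=(a\sqcup b)\curlyvee(a\sqcup c)$; and if $d\lesssim a,b,c,a\curlyvee b,b\curlyvee c$ then $d\lesssim a\curlyvee c$. For sets $X,Y$,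 $\mathrm{Par}(X,Y)$ is the set of partial functions $X\to Y$ as sets of pairs; for $f,g$, $g-f$ is the restriction of $g$ to $X\setminus\mathrm{dom}(f)$ and restricted union is $f\curlyvee g=(f-g)\cup(f\cap g)\cup(g-f)$. A functional algebra of signature $(\curlyvee)$ is one isomorphic to $(A,\curlyvee)$ with $A\subseteq\mathrm{Par}(X,Y)$ closed under restricted union. *)

Section Defs.
Variable S : Type.

Definition is_semilattice (meet : S -> S -> S) : Prop :=
  (forall x y z, meet x (meet y z) = meet (meet x y) z) /\
  (forall x y, meet x y = meet y x) /\
  (forall x, meet x x = x).

Definition sl_le (meet : S -> S -> S) (x y : S) : Prop := x = meet x y.

Definition is_o_semilattice (meet join : S -> S -> S) : Prop :=
  is_semilattice meet /\
  (forall x y, sl_le meet x (join x y)) /\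
  (forall x y z, sl_le meet (join (meet x y) (meet y z)) y) /\
  (forall x y, sl_le meet (join x y) (join x (meet y (join x y)))) /\
  (forall x y z, sl_le meet (meet x z) (join (meet x y) z)).

Definition is_distributive_o (meet join : S -> S -> S) : Prop :=
  is_o_semilattice meet join /\
  (forall a b c d,
     join (meet a d) (meet (meet b d) (meet c d)) =
     meet (join (meet a d) (meet b d)) (join (meet a d) (meet c d))).

Definition is_ado_semilattice (meet join : S -> S -> S) : Prop :=
  is_distributive_o meet join /\
  (forall a b c, join a (join b c) = join (join a b) c).

Definition is_left_regular_band (op : S -> S -> S) : Prop :=
  (forall a b c, op a (op b c) = op (op a b) c) /\
  (forall a, op a a = a) /\
  (forall a b, op a b = op (op a b) a).

Definition vee_sq (vee : S -> S -> S) (a b : S) : S := vee a (vee a b).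

Definition vee_lesssim (vee : S -> S -> S) (a b : S) : Prop :=
  vee_sq vee b a = b.

Definition is_vee_algebra (vee : S -> S -> S) : Prop :=
  is_left_regular_band (vee_sq vee) /\
  (forall a b, vee a b = vee b a) /\
  (forall a, vee a a = a) /\
  (forall a b, vee_sq vee (vee a b) (vee_sq vee a b) = vee_sq vee a b) /\
  (forall a b c, vee_sq vee a (vee b c) = vee (vee_sq vee a b) (vee_sq vee a c)) /\
  (forall a b c d,
     vee_lesssim vee d a -> vee_lesssim vee d b -> vee_lesssim vee d c ->
     vee_lesssim vee d (vee a b) -> vee_lesssim vee d (vee b c) ->
     vee_lesssim vee d (vee a c)).

End Defs.

(* Partial functions X -> Y, as sets of pairs (relations). *)
Definition rel (X Y : Type) := X -> Y -> Prop.

Definition is_partial_function {X Y : Type} (f : rel X Y) : Prop :=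
  forall x y1 y2, f x y1 -> f x y2 -> y1 = y2.

Definition in_dom {X Y : Type} (f : rel X Y) (x : X) : Prop := exists y, f x y.

Definition pf_minus {X Y : Type} (g f : rel X Y) : rel X Y :=
  fun x y => g x y /\ ~ in_dom f x.

Definition restricted_union {X Y : Type} (f g : rel X Y) : rel X Y :=
  fun x y => pf_minus f g x y \/ (f x y /\ g x y) \/ pf_minus g f x y.

Definition is_functional_vee_algebra (S : Type) (vee : S -> S -> S) : Prop :=
  exists (X Y : Type) (A : rel X Y -> Prop) (phi : S -> rel X Y),
    (forall f, A f -> is_partial_function f) /\
    (forall f g, A f -> A g -> A (restricted_union f g)) /\
    (forall a, A (phi a)) /\
    (forall f, A f -> exists a, phi a = f) /\
    (forall a b, phi a = phi b -> a = b) /\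
    (forall a b, phi (vee a b) = restricted_union (phi a) (phi b)).

(* In an ado-semilattice the local distributive law globalises to
   a ⊔ (x ⊓ y) = (a ⊔ x) ⊓ (a ⊔ y).  Hence a ⋎ (a ⋎ b) = a ⊔ b: the override
   operation derived from ⋎ is ⊔ itself, and the equational axioms of a
   ⋎-algebra reduce to associativity, left regularity and left distributivity
   of ⊔.  For the quasi-identity, read d ≲ x as x ⊔ d = x; for x and y below a
   common bound this property passes from x and y to x ⊓ y, hence also from x,
   y and x ⋎ y to x ⊓ y.  So d ≲ a ⊓ b ⊓ c, which lies below a ⋎ c.
   Partial functions X ⇀ Y, encoded as X → option Y with pointwise meet and
   override, form an ado-semilattice whose ⋎ is restricted union.  A functional
   algebra embeds into it, and the axioms of a ⋎-algebra, being universal Horn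
   sentences, are reflected along injective homomorphisms. *)

From Stdlib Require Import Setoid ClassicalEpsilon FunctionalExtensionality PropExtensionality.
Set Implicit Arguments.
Unset Strict Implicit.

Section AdoSemilattice.
Variables (S : Type) (meet join : S -> S -> S).

Local Infix "⊓" := meet (at level 40, left associativity).
Local Infix "⊔" := join (at level 50, left associativity).
Local Notation "x ≤ y" := (sl_le S meet x y) (at level 70).
Local Notation "x ⋎ y" := ((x ⊔ y) ⊓ (y ⊔ x)) (at level 50).

Hypothesis meet_assoc : forall x y z, x ⊓ (y ⊓ z) = x ⊓ y ⊓ z.
Hypothesis meet_comm : forall x y, x ⊓ y = y ⊓ x.
Hypothesis meet_idem : forall x, x ⊓ x = x.
Hypothesis le_join_l : forall x y, x ≤ x ⊔ y.
Hypothesis join_meet_le : forall x y z, (x ⊓ y) ⊔ (y ⊓ z) ≤ y.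
Hypothesis join_le_join_meet : forall x y, x ⊔ y ≤ x ⊔ (y ⊓ (x ⊔ y)).
Hypothesis meet_le_join_meet : forall x y z, x ⊓ z ≤ (x ⊓ y) ⊔ z.
Hypothesis join_meet_distr_local : forall a b c d,
  (a ⊓ d) ⊔ ((b ⊓ d) ⊓ (c ⊓ d)) = ((a ⊓ d) ⊔ (b ⊓ d)) ⊓ ((a ⊓ d) ⊔ (c ⊓ d)).
Hypothesis join_assoc : forall x y z, x ⊔ (y ⊔ z) = x ⊔ y ⊔ z.

Lemma le_refl x : x ≤ x.
Proof. unfold sl_le. now rewrite meet_idem. Qed.

Lemma le_trans x y z : x ≤ y -> y ≤ z -> x ≤ z.
Proof.
  unfold sl_le; intros Hxy Hyz.
  assert (H : x = x ⊓ (y ⊓ z)) by (rewrite <- Hyz; exact Hxy).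
  now rewrite meet_assoc, <- Hxy in H.
Qed.

Lemma le_antisymm x y : x ≤ y -> y ≤ x -> x = y.
Proof. unfold sl_le; intros Hxy Hyx. now rewrite Hxy, meet_comm, <- Hyx. Qed.

Lemma le_meet_l x y : x ⊓ y ≤ x.
Proof. unfold sl_le. now rewrite <- meet_assoc, (meet_comm y x), meet_assoc, meet_idem. Qed.

Lemma le_meet_r x y : x ⊓ y ≤ y.
Proof. unfold sl_le. now rewrite <- meet_assoc, meet_idem. Qed.

Lemma meet_glb x y z : z ≤ x -> z ≤ y -> z ≤ x ⊓ y.
Proof. unfold sl_le; intros Hx Hy. now rewrite meet_assoc, <- Hx. Qed.

Lemma meet_l x y : x ≤ y -> x ⊓ y = x.
Proof. now unfold sl_le. Qed.

Lemma meet_r x y : x ≤ y -> y ⊓ x = x.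
Proof. intros H. now rewrite meet_comm, <- H. Qed.

Lemma join_idem x : x ⊔ x = x.
Proof.
  apply le_antisymm; [|apply le_join_l].
  pose proof (join_meet_le x x x) as H. now rewrite meet_idem in H.
Qed.

Lemma join_lub x y z : x ≤ z -> y ≤ z -> x ⊔ y ≤ z.
Proof.
  intros Hx Hy. pose proof (join_meet_le x z y) as H.
  now rewrite (meet_l Hx), (meet_r Hy) in H.
Qed.

Lemma le_join_r_bounded x y d : x ≤ d -> y ≤ d -> y ≤ x ⊔ y.
Proof.
  intros Hx Hy. pose proof (meet_le_join_meet d x y) as H.
  now rewrite (meet_r Hx), (meet_r Hy) in H.
Qed.

Lemma join_comm_bounded x y d : x ≤ d -> y ≤ d -> x ⊔ y = y ⊔ x.
Proof.
  intros Hx Hy.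
  apply le_antisymm; apply join_lub;
    eauto using le_join_l, le_join_r_bounded.
Qed.

Lemma join_absorb_r x y : y ≤ x -> x ⊔ y = x.
Proof.
  intros H. apply le_antisymm; [|apply le_join_l].
  apply join_lub; [apply le_refl | exact H].
Qed.

Lemma join_absorb_l x y : x ≤ y -> x ⊔ y = y.
Proof.
  intros H. apply le_antisymm.
  - apply join_lub; [exact H | apply le_refl].
  - apply (le_join_r_bounded H), le_refl.
Qed.

Lemma join_join_l x y : x ⊔ y ⊔ x = x ⊔ y.
Proof. apply join_absorb_r, le_join_l. Qed.

Lemma join_meet_join x y : x ⊔ (y ⊓ (x ⊔ y)) = x ⊔ y.
Proof.
  apply le_antisymm; [|apply join_le_join_meet].
  apply join_lub; [apply le_join_l | apply le_meet_r].
Qed.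

Lemma join_mono_r x y y' : y ≤ y' -> x ⊔ y ≤ x ⊔ y'.
Proof. intros H. rewrite <- (join_absorb_l H), join_assoc. apply le_join_l. Qed.

Lemma join_meet_distr_bounded a b c d : a ≤ d -> b ≤ d -> c ≤ d ->
  a ⊔ (b ⊓ c) = (a ⊔ b) ⊓ (a ⊔ c).
Proof.
  intros Ha Hb Hc. pose proof (join_meet_distr_local a b c d) as H.
  now rewrite (meet_l Ha), (meet_l Hb), (meet_l Hc) in H.
Qed.

Lemma meet_join_distr_bounded a b c d : a ≤ d -> b ≤ d -> c ≤ d ->
  a ⊓ (b ⊔ c) = (a ⊓ b) ⊔ (a ⊓ c).
Proof.
  intros Ha Hb Hc.
  assert (Hab : a ⊓ b ≤ d) by (eapply le_trans; [apply le_meet_l | exact Ha]).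
  rewrite (join_meet_distr_bounded Hab Ha Hc), (join_absorb_l (le_meet_l a b)).
  rewrite (join_comm_bounded Hab Hc), (join_meet_distr_bounded Hc Ha Hb).
  rewrite (join_comm_bounded Hc Ha), (join_comm_bounded Hc Hb).
  now rewrite meet_assoc, (meet_l (le_join_l a c)).
Qed.

Lemma meet_split_below_join m a z : m ≤ a ⊔ z ->
  m = (m ⊓ a) ⊔ (m ⊓ (z ⊓ (a ⊔ z))).
Proof.
  intros H. set (u := a ⊔ z).
  rewrite <- (meet_join_distr_bounded H (le_join_l a z) (le_meet_r z u)).
  unfold u. now rewrite join_meet_join, (meet_l H).
Qed.

Lemma join_meet_distr_l a x y : a ⊔ (x ⊓ y) = (a ⊔ x) ⊓ (a ⊔ y).
Proof.
  apply le_antisymm.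
  { apply meet_glb; apply join_mono_r; [apply le_meet_l | apply le_meet_r]. }
  set (m := (a ⊔ x) ⊓ (a ⊔ y)).
  set (p := m ⊓ a).
  set (q := m ⊓ (x ⊓ (a ⊔ x))).
  set (r := m ⊓ (y ⊓ (a ⊔ y))).
  assert (Hq : m = p ⊔ q) by apply meet_split_below_join, le_meet_l.
  assert (Hr : m = p ⊔ r) by apply meet_split_below_join, le_meet_r.
  assert (Hqr : m = p ⊔ (q ⊓ r)).
  { rewrite (@join_meet_distr_bounded p q r m (le_meet_l _ _) (le_meet_l _ _) (le_meet_l _ _)).
    now rewrite <- Hq, <- Hr, meet_idem. }
  assert (Hm : m ≤ a ⊔ m)
    by exact (le_join_r_bounded (le_join_l a x) (le_meet_l _ _)).
  apply (le_trans Hm).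
  rewrite Hqr at 1. rewrite join_assoc, (@join_absorb_r a p (le_meet_r m a)).
  apply join_mono_r, meet_glb.
  - exact (le_trans (le_meet_l q r) (le_trans (le_meet_r m _) (le_meet_l x _))).
  - exact (le_trans (le_meet_r q r) (le_trans (le_meet_r m _) (le_meet_l y _))).
Qed.

Lemma join_vee a b : a ⊔ (a ⋎ b) = a ⊔ b.
Proof.
  now rewrite join_meet_distr_l, join_assoc, join_idem, join_assoc, join_join_l, meet_idem.
Qed.

Lemma vee_vee a b : a ⋎ (a ⋎ b) = a ⊔ b.
Proof.
  rewrite <- (join_comm_bounded (le_join_l a b) (le_meet_l _ (b ⊔ a))).
  now rewrite join_vee, meet_idem.
Qed.

Lemma join_absorbs_le p q d : p ≤ q -> p ⊔ d = p -> q ⊔ d = q.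
Proof.
  intros Hpq Hp. rewrite <- (join_absorb_r Hpq) at 1.
  rewrite <- join_assoc, Hp. exact (join_absorb_r Hpq).
Qed.

Lemma meet_le_of_join_absorbs x e d : x ≤ e -> x ⊔ d = x -> e ⊓ d ≤ x.
Proof.
  intros Hx Hd. pose proof (meet_le_join_meet e x d) as H.
  now rewrite (meet_r Hx), Hd in H.
Qed.

Lemma join_restrict_eq z e d : z ≤ e -> z ⊔ d = z -> z ⊔ (e ⊓ (d ⊔ e)) = e.
Proof.
  intros Hz Hd.
  rewrite join_meet_distr_l, join_assoc, Hd, (join_absorb_l Hz). apply meet_idem.
Qed.

Lemma join_absorbs_of_restrict u e d : u ≤ e -> e ⊔ d = e -> e ⊓ d ≤ u ->
  u ⊔ (e ⊓ (d ⊔ e)) = e -> u ⊔ d = u.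
Proof.
  intros Hu He Hd Hr.
  set (g := u ⊔ d).
  assert (Heg : e ≤ g ⊔ e).
  { unfold sl_le. rewrite <- Hr at 1.
    now rewrite join_meet_distr_l, (join_absorb_l Hu), join_assoc. }
  assert (Hge : g ⊔ e = e).
  { rewrite (join_comm_bounded (le_join_l g e) Heg). unfold g.
    now rewrite join_assoc, (join_absorb_r Hu). }
  assert (Hg : g ≤ e) by (rewrite <- Hge; apply le_join_l).
  apply le_antisymm; [|apply le_join_l].
  unfold g. rewrite <- join_meet_join. fold g.
  apply join_lub; [apply le_refl|].
  apply (le_trans (y := e ⊓ d)); [|exact Hd].
  apply meet_glb; [exact (le_trans (le_meet_r d g) Hg) | apply le_meet_l].
Qed.

Lemma meet_join_absorbs x y e d : x ≤ e -> y ≤ e -> x ⊔ d = x -> y ⊔ d = y ->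
  (x ⊓ y) ⊔ d = x ⊓ y.
Proof.
  intros Hx Hy Hxd Hyd.
  assert (Hxy : x ⊓ y ≤ e) by exact (le_trans (le_meet_l x y) Hx).
  apply (join_absorbs_of_restrict Hxy).
  - exact (join_absorbs_le Hx Hxd).
  - apply meet_glb; eapply meet_le_of_join_absorbs; eauto.
  - set (e' := e ⊓ (d ⊔ e)).
    assert (He' : e' ≤ e) by apply le_meet_l.
    rewrite (join_comm_bounded Hxy He'), join_meet_distr_l.
    rewrite <- (join_comm_bounded Hx He'), <- (join_comm_bounded Hy He').
    unfold e'. rewrite !join_restrict_eq by assumption. apply meet_idem.
Qed.

Lemma meet_le_vee x y : x ⊓ y ≤ x ⋎ y.
Proof.
  apply meet_glb.
  - exact (le_trans (le_meet_l x y) (le_join_l x y)).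
  - exact (le_trans (le_meet_r x y) (le_join_l y x)).
Qed.

Lemma meet_join_absorbs_of_vee x y d :
  x ⊔ d = x -> y ⊔ d = y -> (x ⋎ y) ⊔ d = x ⋎ y -> (x ⊓ y) ⊔ d = x ⊓ y.
Proof.
  intros Hx Hy Hv.
  pose proof (meet_join_absorbs (le_join_l x y) (le_meet_l _ _) Hx Hv) as Hxv.
  pose proof (meet_join_absorbs (le_join_l y x) (le_meet_r _ _) Hy Hv) as Hyv.
  refine (join_absorbs_le _ (meet_join_absorbs (le_meet_r _ _) (le_meet_r _ _) Hxv Hyv)).
  apply meet_glb.
  - exact (le_trans (le_meet_l _ _) (le_meet_l _ _)).
  - exact (le_trans (le_meet_r _ _) (le_meet_l _ _)).
Qed.

Theorem ado_axioms_vee_algebra : is_vee_algebra S (fun a b => a ⋎ b).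
Proof.
  assert (Hsq : forall a b, vee_sq S (fun a b => a ⋎ b) a b = a ⊔ b) by exact vee_vee.
  unfold is_vee_algebra, is_left_regular_band, vee_lesssim. repeat setoid_rewrite Hsq.
  repeat split.
  - exact join_assoc.
  - exact join_idem.
  - intros a b. symmetry. apply join_join_l.
  - intros a b. apply meet_comm.
  - intros a. now rewrite join_idem, meet_idem.
  - intros a b. apply join_absorb_l, le_meet_l.
  - intros a b c. now rewrite join_meet_distr_l, !join_assoc, !join_join_l.
  - intros a b c d Ha Hb Hc Hab Hbc.
    pose proof (meet_join_absorbs_of_vee Ha Hb Hab) as Hab'.
    pose proof (meet_join_absorbs_of_vee Hb Hc Hbc) as Hbc'.
    refine (join_absorbs_le _ (meet_join_absorbs (le_meet_r _ _) (le_meet_l _ _) Hab' Hbc')).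
    refine (le_trans _ (meet_le_vee a c)).
    apply meet_glb.
    + exact (le_trans (le_meet_l _ _) (le_meet_l _ _)).
    + exact (le_trans (le_meet_r _ _) (le_meet_r _ _)).
Qed.

End AdoSemilattice.

Lemma ado_semilattice_vee_algebra (S : Type) (meet join : S -> S -> S) :
  is_ado_semilattice S meet join ->
  is_vee_algebra S (fun a b => meet (join a b) (join b a)).
Proof.
  intros [[[[mA [mC mI]] [o1 [o2 [o3 o4]]]] distr] jA].
  exact (ado_axioms_vee_algebra mA mC mI o1 o2 o3 o4 distr jA).
Qed.

Lemma pointwise_ado_semilattice (X S : Type) (meet join : S -> S -> S) :
  is_ado_semilattice S meet join ->
  is_ado_semilattice (X -> S) (fun f g x => meet (f x) (g x)) (fun f g x => join (f x) (g x)).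
Proof.
  intros [[[[mA [mC mI]] [o1 [o2 [o3 o4]]]] dist] jA].
  unfold is_ado_semilattice, is_distributive_o, is_o_semilattice, is_semilattice, sl_le in *.
  repeat split; intros; apply functional_extensionality; intros; auto.
Qed.

Section OptionOverride.
Variable Y : Type.

Definition option_meet (o o' : option Y) : option Y :=
  match o, o' with
  | Some a, Some b => if excluded_middle_informative (a = b) then Some a else None
  | _, _ => None
  end.

Definition option_override (o o' : option Y) : option Y :=
  match o with
  | Some a => Some a
  | None => o'
  end.

Lemma option_ado_semilattice : is_ado_semilattice (option Y) option_meet option_override.
Proof.
  unfold is_ado_semilattice, is_distributive_o, is_o_semilattice, is_semilattice, sl_le.
  repeat split; intros;
    repeat match goal with o : option Y |- _ => destruct o end;
    simpl; repeat match goal with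
      | |- context [excluded_middle_informative ?P] =>
          destruct (excluded_middle_informative P); subst; simpl
      end;
    congruence.
Qed.

End OptionOverride.

Section PartialFunctionsAsOptions.
Variables X Y : Type.

Definition option_of_rel (f : rel X Y) (x : X) : option Y :=
  epsilon (inhabits None) (fun o => forall y, f x y <-> o = Some y).

Lemma option_ext (o o' : option Y) : (forall y, o = Some y <-> o' = Some y) -> o = o'.
Proof.
  intros H. destruct o as [a|], o' as [b|]; try reflexivity.
  - now apply H.
  - discriminate (proj1 (H a) eq_refl).
  - discriminate (proj2 (H b) eq_refl).
Qed.

Lemma option_of_rel_spec (f : rel X Y) x o :
  (forall y, f x y <-> o = Some y) -> forall y, f x y <-> option_of_rel f x = Some y.
Proof.
  intros Ho.
  exact (epsilon_spec (inhabits None) (fun o => forall y, f x y <-> o = Some y) (ex_intro _ o Ho)).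
Qed.

Lemma option_of_rel_eq (f : rel X Y) x o :
  (forall y, f x y <-> o = Some y) -> option_of_rel f x = o.
Proof.
  intros Ho. apply option_ext. intros y.
  now rewrite <- (option_of_rel_spec Ho), Ho.
Qed.

Lemma option_of_relP (f : rel X Y) :
  is_partial_function f -> forall x y, f x y <-> option_of_rel f x = Some y.
Proof.
  intros Hf x. destruct (classic (exists y, f x y)) as [[y0 Hy0]|Hx].
  - apply (@option_of_rel_spec f x (Some y0)). intros y. split.
    + intros H. f_equal. exact (Hf x _ _ Hy0 H).
    + now injection 1 as ->.
  - apply (@option_of_rel_spec f x None). intros y. split.
    + intros H. exfalso. eauto.
    + discriminate.
Qed.

Lemma option_of_rel_inj (f g : rel X Y) :
  is_partial_function f -> is_partial_function g -> option_of_rel f = option_of_rel g -> f = g.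
Proof.
  intros Hf Hg E.
  apply functional_extensionality; intros x. apply functional_extensionality; intros y.
  apply propositional_extensionality.
  now rewrite (option_of_relP Hf), (option_of_relP Hg), E.
Qed.

Lemma option_of_rel_restricted_union (f g : rel X Y) :
  is_partial_function f -> is_partial_function g ->
  option_of_rel (restricted_union f g) =
  (fun x => option_meet (option_override (option_of_rel f x) (option_of_rel g x))
                        (option_override (option_of_rel g x) (option_of_rel f x))).
Proof.
  intros Hf Hg. apply functional_extensionality; intros x.
  apply option_of_rel_eq. intros y.
  unfold restricted_union, pf_minus, in_dom.
  setoid_rewrite (option_of_relP Hf). setoid_rewrite (option_of_relP Hg).
  destruct (option_of_rel f x) as [a|], (option_of_rel g x) as [b|]; simpl;
    repeat match goal with
      | |- context [excluded_middle_informative ?P] => destruct (excluded_middle_informative P)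
      end; subst; firstorder congruence.
Qed.

End PartialFunctionsAsOptions.

Section Embedding.
Variables (S T : Type) (veeS : S -> S -> S) (veeT : T -> T -> T) (psi : S -> T).
Hypothesis psi_inj : forall a b, psi a = psi b -> a = b.
Hypothesis psi_vee : forall a b, psi (veeS a b) = veeT (psi a) (psi b).

Lemma psi_vee_sq a b : psi (vee_sq S veeS a b) = vee_sq T veeT (psi a) (psi b).
Proof. unfold vee_sq. now rewrite !psi_vee. Qed.

Lemma vee_algebra_of_embedding : is_vee_algebra T veeT -> is_vee_algebra S veeS.
Proof.
  unfold is_vee_algebra, is_left_regular_band, vee_lesssim.
  intros [[HA [HI HL]] [HC [HV [HD [HE HQ]]]]].
  repeat split; intros; apply psi_inj; rewrite ?psi_vee_sq, ?psi_vee, ?psi_vee_sq; auto.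
  apply (HQ _ (psi b)); rewrite <- ?psi_vee, <- ?psi_vee_sq; congruence.
Qed.

End Embedding.

Theorem corollary3p10 :
  (forall (S : Type) (meet join : S -> S -> S),
     is_ado_semilattice S meet join ->
     is_vee_algebra S (fun a b => meet (join a b) (join b a))) /\
  (forall (S : Type) (vee : S -> S -> S),
     is_functional_vee_algebra S vee -> is_vee_algebra S vee).
Proof.
  split; [exact ado_semilattice_vee_algebra|].
  intros S vee [X [Y [A [phi [A_pf [_ [A_phi [_ [phi_inj phi_vee]]]]]]]]].
  assert (phi_pf : forall a, is_partial_function (phi a)) by auto.
  refine (vee_algebra_of_embedding (psi := fun a => option_of_rel (phi a)) _ _
            (ado_semilattice_vee_algebra
               (pointwise_ado_semilattice X (option_ado_semilattice Y)))).
  - intros a b E. apply phi_inj, option_of_rel_inj; auto.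
  - intros a b. rewrite phi_vee. apply option_of_rel_restricted_union; auto.
Qed.
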